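(* Consider a discounted Markov decision problem as described in the context, and let $\rho,\mu\in\Delta(\mathcal{S})$. Suppose $V_\mu$ is $L$-smooth on $\Pi$, i.e. $\|\nabla V_\mu(\pi)-\nabla V_\mu(\pi')\|_2\le L\|\pi-\pi'\|_2$ for all $\pi,\pi'\in\Pi$, for some $L>0$. Define, for $\pi\in\Pi$, \[ T_L(\pi)=\mathrm{proj}_\Pi\Bigl(\pi-\frac1L\nabla V_\mu(\pi)\Bigr),\qquad G_L(\pi)=L\bigl(\pi-T_L(\pi)\bigr). \] Then for all $\pi\in\Pi$, \[ V_\rho\bigl(T_L(\pi)\bigr)-V_\rho^\star\le\frac{2\sqrt{2|\mathcal{S}|}}{1-\gamma}\left\|\frac{d_\rho(\pi^\star)}{\mu}\right\|_\infty\|G_L(\pi)\|_2 . \]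
   Context: A discounted Markov decision problem (in cost-minimization form) consists of a finite state set $\mathcal{S}$, a finite action set $\mathcal{A}$, transition probabilities $P(s'|s,a)$, a cost function $R:\mathcal{S}\times\mathcal{A}\to[0,1]$ (written $R_{s,a}$), and a discount factor $\gamma\in[0,1)$. Policies: $\Pi=\Delta(\mathcal{A})^{|\mathcal{S}|}\subset\mathbf{R}^{|\mathcal{S}|\times|\mathcal{A}|}$, $\pi_{s,a}$ the probability of action $a$ at state $s$. $V_s(\pi)=\mathbf{E}\bigl[\sum_{t\ge0}\gamma^tR(s_t,a_t)\mid s_0=s\bigr]$ with $a_t\sim\pi_{s_t}$, $s_{t+1}\sim P(\cdot|s_t,a_t)$; $V_\rho(\pi)=\sum_s\rho_sV_s(\pi)$, $V^\star_\rho=\min_{\pi\in\Pi}V_\rho(\pi)$; $\pi^\star$ denotes a policy minimizing $V_s$ simultaneously for all $s$. $Q_{s,a}(\pi)=R_{s,a}+\gamma\sum_{s'}P(s'|s,a)V_{s'}(\pi)$. Discounted state visitation: $d_{s,s'}(\pi)=(1-\gamma)\sum_{t\ge0}\gamma^t\Pr^\pi(s_t=s'\mid s_0=s)$, $d_{\rho,s'}(\pi)=\sum_s\rho_sd_{s,s'}(\pi)$. The policy gradient $\nabla V_\mu(\pi)$ has entries $\frac1{1-\gamma}d_{\mu,s}(\pi)Q_{s,a}(\pi)$. For $p,q\in\Delta(\mathcal{S})$, $\|p/q\|_\infty=\max_sp_s/q_s$ with $0/0=1$. $\mathrm{proj}_\Pi$ denotes Euclidean projection onto $\Pi$. *)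

From HB Require Import structures.
From mathcomp Require Import all_boot all_order all_algebra.
From mathcomp Require Import all_classical all_reals all_analysis.
Set Implicit Arguments. Unset Strict Implicit. Unset Printing Implicit Defensive.
Import Order.TTheory GRing.Theory Num.Theory.
Local Open Scope ring_scope.
Local Open Scope classical_set_scope.

Section MDP.
Variables (R : realType) (S A : finType).

Definition is_distr (p : S -> R) : Prop :=
  (forall s, 0 <= p s) /\ \sum_(s : S) p s = 1.

Definition is_policy (pi : S -> A -> R) : Prop :=
  forall s, (forall a, 0 <= pi s a) /\ \sum_(a : A) pi s a = 1.

Definition norm2 (x : S -> A -> R) : R :=
  Num.sqrt (\sum_(s : S) \sum_(a : A) x s a ^+ 2).

Variables (P : S -> A -> S -> R) (Rc : S -> A -> R) (gamma : R).

Fixpoint prob_t (pi : S -> A -> R) (t : nat) (s s' : S) : R :=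
  match t with
  | 0 => if s == s' then 1 else 0
  | t'.+1 => \sum_(s'' : S) prob_t pi t' s s'' *
                 \sum_(a : A) pi s'' a * P s'' a s'
  end.

Definition V (pi : S -> A -> R) (s : S) : R :=
  \big[+%R/0%R]_(0 <= t <oo) (gamma ^+ t *
     \sum_(s' : S) prob_t pi t s s' * \sum_(a : A) pi s' a * Rc s' a).

Definition Vrho (rho : S -> R) (pi : S -> A -> R) : R :=
  \sum_(s : S) rho s * V pi s.

Definition Vstar (rho : S -> R) : R :=
  inf [set Vrho rho pi | pi in is_policy].

Definition Q (pi : S -> A -> R) (s : S) (a : A) : R :=
  Rc s a + gamma * \sum_(s' : S) P s a s' * V pi s'.

Definition dvis (pi : S -> A -> R) (s s' : S) : R :=
  (1 - gamma) * \big[+%R/0%R]_(0 <= t <oo) (gamma ^+ t * prob_t pi t s s').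

Definition drho (rho : S -> R) (pi : S -> A -> R) (s' : S) : R :=
  \sum_(s : S) rho s * dvis pi s s'.

Definition gradV (mu : S -> R) (pi : S -> A -> R) (s : S) (a : A) : R :=
  (1 - gamma)^-1 * drho mu pi s * Q pi s a.

End MDP.

Definition is_proj_Pi (R : realType) (S A : finType)
  (x p : S -> A -> R) : Prop :=
  is_policy p /\ forall q, is_policy q -> norm2 (fun s a => x s a - p s a)
                                          <= norm2 (fun s a => x s a - q s a).

(* || p / q ||_inf with the convention 0/0 = 1 and c/0 = +oo for c > 0 *)
Definition ratio_inf (R : realType) (S : finType) (p q : S -> R) : \bar R :=
  \big[maxe/-oo%E]_(s : S)
     (if q s == 0 then (if p s == 0 then 1%E else +oo%E) else (p s / q s)%:E).

(* By the performance difference lemma, (1 - gamma) (V_rho(T) - V_rho(pistar)) equals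
   sum_s d_rho,s(pistar) sum_a (T - pistar)_{s,a} Q_{s,a}(T). Where the inner sum is
   nonnegative, d_rho(pistar) <= c mu <= c d_mu(T) / (1 - gamma) with c = ||d_rho(pistar) / mu||;
   on the other states pistar is replaced by T, which only increases the sum. The resulting
   policy r bounds the sum by c <grad V_mu(T), T - r>. As T is a projected gradient step from
   pi, the variational inequality of the projection and L-smoothness give
   <grad V_mu(T), T - r> <= 2 ||G_L(pi)|| ||T - r||, and two policies are at distance at most
   sqrt(2 |S|). *)

From HB Require Import structures.
From mathcomp Require Import all_boot all_order all_algebra.
From mathcomp Require Import all_classical all_reals all_analysis.
From mathcomp Require Import ring lra.
Import Order.TTheory GRing.Theory Num.Theory.
Import numFieldNormedType.Exports.
Set Implicit Arguments. Unset Strict Implicit. Unset Printing Implicit Defensive.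
Local Open Scope ring_scope.

Section DiscountedSum.
Variables (R : realType) (g : R).
Hypothesis hg : 0 <= g < 1.

Definition bounded_seq (c : nat -> R) := exists M, forall t, `|c t| <= M.

Definition dsum (c : nat -> R) : R := limn (series (fun t => g ^+ t * c t)).

Lemma bounded_seqD c1 c2 :
  bounded_seq c1 -> bounded_seq c2 -> bounded_seq (fun t => c1 t + c2 t).
Proof.
move=> [M1 h1] [M2 h2]; exists (M1 + M2) => t.
exact: le_trans (ler_normD _ _) (lerD (h1 t) (h2 t)).
Qed.

Lemma bounded_seqZ k c : bounded_seq c -> bounded_seq (fun t => k * c t).
Proof. by move=> [M h]; exists (`|k| * M) => t; rewrite normrM ler_wpM2l. Qed.

Lemma bounded_seq_sum (I : Type) (r : seq I) (F : I -> nat -> R) :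
  (forall i, bounded_seq (F i)) -> bounded_seq (fun t => \sum_(i <- r) F i t).
Proof.
move=> hF; elim: r => [|i r IH].
  by exists 0 => t; rewrite big_nil normr0.
under [fun t => _]funext do rewrite big_cons.
exact: bounded_seqD.
Qed.

Lemma is_cvg_dsum c : bounded_seq c -> cvgn (series (fun t => g ^+ t * c t)).
Proof.
case/andP: hg => g0 g1 [M cM].
have M0 : 0 <= M := le_trans (normr_ge0 _) (cM 0%N).
apply/normed_cvg/(@series_le_cvg _ _ (geometric M g)) => [t|t|t|].
- exact: normr_ge0.
- by rewrite /geometric /= mulr_ge0 // exprn_ge0.
- by rewrite /geometric /= normrM ger0_norm ?exprn_ge0 // mulrC ler_wpM2r ?exprn_ge0.
- by apply: is_cvg_geometric_series; rewrite ger0_norm.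
Qed.

Lemma dsumD c1 c2 : bounded_seq c1 -> bounded_seq c2 ->
  dsum (fun t => c1 t + c2 t) = dsum c1 + dsum c2.
Proof.
move=> b1 b2; rewrite /dsum -lim_seriesD; try exact: is_cvg_dsum.
by congr (limn (series _)); apply/funext => t /=; rewrite mulrDr.
Qed.

Lemma dsumZ k c : bounded_seq c -> dsum (fun t => k * c t) = k * dsum c.
Proof.
move=> b; rewrite /dsum -[RHS]lim_seriesZ; last exact: is_cvg_dsum.
by congr (limn (series _)); apply/funext => t /=; rewrite mulrCA.
Qed.

Lemma dsum_sum (I : Type) (r : seq I) (F : I -> nat -> R) :
  (forall i, bounded_seq (F i)) ->
  dsum (fun t => \sum_(i <- r) F i t) = \sum_(i <- r) dsum (F i).
Proof.
move=> hF; elim: r => [|i r IH].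
  rewrite big_nil /dsum (_ : series _ = fun=> 0) ?lim_cst //.
  by apply/funext => n; rewrite /series /= big1 // => t _; rewrite big_nil mulr0.
under [fun t => _]funext do rewrite big_cons.
by rewrite dsumD ?big_cons ?IH //; apply: bounded_seq_sum.
Qed.

Lemma dsum_ge0 c : bounded_seq c -> (forall t, 0 <= c t) -> 0 <= dsum c.
Proof.
move=> b c0; apply: limr_ge; first exact: is_cvg_dsum.
near=> n; apply: sumr_ge0 => t _; apply: mulr_ge0 => //.
by case/andP: hg => g0 _; rewrite exprn_ge0.
Unshelve. all: by end_near.
Qed.

Lemma dsumS c : bounded_seq c -> dsum c = c 0%N + g * dsum (fun t => c t.+1).
Proof.
move=> b; have bS : bounded_seq (fun t => c t.+1) by case: b => M hM; exists M.
set u := series (fun t => g ^+ t * c t).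
have shiftE : limn [sequence u n.+1]_n = limn u.
  by apply: cvg_lim => //; rewrite cvg_shiftS; exact: is_cvg_dsum.
rewrite /dsum -/u -shiftE.
have -> : [sequence u n.+1]_n =
    (fun n => c 0%N + g * series (fun t => g ^+ t * c t.+1) n).
  apply/funext => n; rewrite /u /series /= big_nat_recl // expr0 mul1r mulr_sumr.
  by congr (_ + _); apply: eq_bigr => t _; rewrite exprS mulrA.
apply: cvg_lim => //; apply: cvgD; first exact: cvg_cst.
by apply: cvgM; [exact: cvg_cst | exact: is_cvg_dsum].
Qed.

End DiscountedSum.

Section MarkovChain.
Variables (R : realType) (S A : finType) (P : S -> A -> S -> R) (Rc : S -> A -> R).
Variables (gamma : R) (pi : S -> A -> R).
Hypotheses (hP : forall s a, is_distr (P s a)) (hpi : is_policy pi).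
Hypothesis hg : 0 <= gamma < 1.

Definition Ppi (s s' : S) : R := \sum_(a : A) pi s a * P s a s'.

Lemma Ppi_ge0 s s' : 0 <= Ppi s s'.
Proof.
by apply: sumr_ge0 => a _; apply: mulr_ge0; [case: (hpi s) | case: (hP s a)].
Qed.

Lemma sum_Ppi s : \sum_(s' : S) Ppi s s' = 1.
Proof.
rewrite exchange_big /= -(proj2 (hpi s)); apply: eq_bigr => a _.
by rewrite -mulr_sumr (proj2 (hP s a)) mulr1.
Qed.

Lemma prob_tS t s s' :
  prob_t P pi t.+1 s s' = \sum_(u : S) prob_t P pi t s u * Ppi u s'.
Proof. by []. Qed.

Lemma sum_delta (s : S) (f : S -> R) :
  \sum_(u : S) (if s == u then 1 else 0) * f u = f s.
Proof.
rewrite (bigD1 s) //= eqxx mul1r big1 ?addr0 // => u /negPf.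
by rewrite eq_sym => ->; rewrite mul0r.
Qed.

Lemma prob_tSl t s s' :
  prob_t P pi t.+1 s s' = \sum_(u : S) Ppi s u * prob_t P pi t u s'.
Proof.
elim: t s s' => [|t IH] s s'.
  rewrite prob_tS sum_delta (bigD1 s') //= eqxx mulr1 big1 ?addr0 //.
  by move=> u /negPf ->; rewrite mulr0.
rewrite prob_tS; under eq_bigr do rewrite IH mulr_suml.
rewrite exchange_big; apply: eq_bigr => v _.
by rewrite prob_tS mulr_sumr; apply: eq_bigr => u _; rewrite mulrA.
Qed.

Lemma prob_t_ge0 t s s' : 0 <= prob_t P pi t s s'.
Proof.
elim: t s s' => [|t IH] s s' /=; first by case: eqP.
by apply: sumr_ge0 => u _; rewrite mulr_ge0 ?Ppi_ge0.
Qed.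

Lemma sum_prob_t t s : \sum_(s' : S) prob_t P pi t s s' = 1.
Proof.
elim: t s => [|t IH] s.
  by rewrite -[RHS](sum_delta s (fun=> 1)); apply: eq_bigr => u _; rewrite mulr1.
under eq_bigr do rewrite prob_tS.
rewrite exchange_big /= -[RHS](IH s); apply: eq_bigr => u _.
by rewrite -mulr_sumr sum_Ppi mulr1.
Qed.

Lemma prob_t_le1 t s s' : prob_t P pi t s s' <= 1.
Proof.
rewrite -(sum_prob_t t s) (bigD1 s') //= lerDl.
by apply: sumr_ge0 => u _; exact: prob_t_ge0.
Qed.

Lemma bounded_prob_t s s' : bounded_seq (fun t => prob_t P pi t s s').
Proof. by exists 1 => t; rewrite ger0_norm ?prob_t_le1 ?prob_t_ge0. Qed.

Lemma bounded_prob_t_sum s (f : S -> R) :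
  bounded_seq (fun t => \sum_(s' : S) prob_t P pi t s s' * f s').
Proof.
apply: bounded_seq_sum => s'; under [fun t => _]funext do rewrite mulrC.
exact/bounded_seqZ/bounded_prob_t.
Qed.

Definition Rpi (s : S) : R := \sum_(a : A) pi s a * Rc s a.

Lemma VE s :
  V P Rc gamma pi s = dsum gamma (fun t => \sum_(s' : S) prob_t P pi t s s' * Rpi s').
Proof. by []. Qed.

Lemma dvisE s s' :
  dvis P gamma pi s s' = (1 - gamma) * dsum gamma (fun t => prob_t P pi t s s').
Proof. by []. Qed.

Lemma V_bellman s :
  V P Rc gamma pi s = Rpi s + gamma * \sum_(u : S) Ppi s u * V P Rc gamma pi u.
Proof.
rewrite VE dsumS //; last exact: bounded_prob_t_sum.
rewrite /= sum_delta; congr (_ + gamma * _).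
have -> : (fun t => \sum_(s' : S) prob_t P pi t.+1 s s' * Rpi s') =
    (fun t => \sum_(u : S) Ppi s u * \sum_(s' : S) prob_t P pi t u s' * Rpi s').
  apply/funext => t; under eq_bigr do rewrite prob_tSl mulr_suml.
  rewrite exchange_big; apply: eq_bigr => u _; rewrite mulr_sumr.
  by apply: eq_bigr => v _; rewrite mulrA.
rewrite dsum_sum //; last by move=> u; apply/bounded_seqZ/bounded_prob_t_sum.
by apply: eq_bigr => u _; rewrite dsumZ ?VE //; exact: bounded_prob_t_sum.
Qed.

Lemma dvis_bellman s s' :
  dvis P gamma pi s s' = (1 - gamma) * (if s == s' then 1 else 0)
     + gamma * \sum_(u : S) dvis P gamma pi s u * Ppi u s'.
Proof.
rewrite dvisE dsumS //; last exact: bounded_prob_t.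
rewrite mulrDr mulrCA; congr (_ + gamma * _).
have -> : (fun t => prob_t P pi t.+1 s s') =
    (fun t => \sum_(u : S) Ppi u s' * prob_t P pi t s u).
  by apply/funext => t; rewrite prob_tS; apply: eq_bigr => u _; rewrite mulrC.
rewrite dsum_sum //; last by move=> u; apply/bounded_seqZ/bounded_prob_t.
rewrite mulr_sumr; apply: eq_bigr => u _.
by rewrite dsumZ ?dvisE //; [ring | exact: bounded_prob_t].
Qed.

Lemma dvis_ge0 s s' : 0 <= dvis P gamma pi s s'.
Proof.
case/andP: hg => _ g1; rewrite dvisE mulr_ge0 // ?subr_ge0 ?(ltW g1) //.
by apply: dsum_ge0 => //; [exact: bounded_prob_t | move=> t; exact: prob_t_ge0].
Qed.

Lemma dvis_diag_ge s : 1 - gamma <= dvis P gamma pi s s.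
Proof.
case/andP: hg => g0 _; rewrite dvis_bellman eqxx mulr1 lerDl mulr_ge0 //.
by apply: sumr_ge0 => u _; rewrite mulr_ge0 ?dvis_ge0 ?Ppi_ge0.
Qed.

Lemma sum_dvis_Rpi s :
  \sum_(u : S) dvis P gamma pi s u * Rpi u = (1 - gamma) * V P Rc gamma pi s.
Proof.
rewrite VE.
have -> : (fun t => \sum_(s' : S) prob_t P pi t s s' * Rpi s') =
    (fun t => \sum_(u : S) Rpi u * prob_t P pi t s u).
  by apply/funext => t; apply: eq_bigr => u _; rewrite mulrC.
rewrite dsum_sum //; last by move=> u; apply/bounded_seqZ/bounded_prob_t.
rewrite mulr_sumr; apply: eq_bigr => u _.
by rewrite dsumZ ?dvisE //; [ring | exact: bounded_prob_t].
Qed.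

Lemma drho_ge0 rho : (forall s, 0 <= rho s) -> forall u, 0 <= drho P gamma rho pi u.
Proof. by move=> rho0 u; apply: sumr_ge0 => s _; rewrite mulr_ge0 ?dvis_ge0. Qed.

Lemma drho_ge mu : is_distr mu -> forall u, (1 - gamma) * mu u <= drho P gamma mu pi u.
Proof.
move=> [mu0 _] u; rewrite /drho (bigD1 u) //= mulrC.
apply: ler_wpDr; first by apply: sumr_ge0 => s _; rewrite mulr_ge0 ?dvis_ge0.
by rewrite ler_wpM2l ?dvis_diag_ge.
Qed.

End MarkovChain.

Section PerformanceDifference.
Variables (R : realType) (S A : finType) (P : S -> A -> S -> R) (Rc : S -> A -> R).
Variable gamma : R.
Hypotheses (hP : forall s a, is_distr (P s a)) (hg : 0 <= gamma < 1).

Lemma sum_policy_Q (p q : S -> A -> R) u :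
  \sum_(a : A) p u a * Q P Rc gamma q u a =
  Rpi Rc p u + gamma * \sum_(v : S) Ppi P p u v * V P Rc gamma q v.
Proof.
under eq_bigr do rewrite mulrDr.
rewrite big_split /=; congr (_ + _).
transitivity (\sum_(a : A) \sum_(v : S) gamma * (p u a * P u a v * V P Rc gamma q v)).
  apply: eq_bigr => a _; rewrite mulrCA !mulr_sumr.
  by apply: eq_bigr => v _; rewrite !mulrA.
rewrite exchange_big mulr_sumr; apply: eq_bigr => v _.
by rewrite -mulr_sumr -mulr_suml.
Qed.

Lemma performance_difference (p q : S -> A -> R) : is_policy p -> is_policy q ->
  forall s, \sum_(u : S) dvis P gamma p s u * \sum_(a : A) (q u a - p u a) * Q P Rc gamma q u a
  = (1 - gamma) * (V P Rc gamma q s - V P Rc gamma p s).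
Proof.
move=> hp hq s.
have advE u : \sum_(a : A) (q u a - p u a) * Q P Rc gamma q u a =
    V P Rc gamma q u - Rpi Rc p u - gamma * \sum_(v : S) Ppi P p u v * V P Rc gamma q v.
  by under eq_bigr do rewrite mulrBl; rewrite sumrB !sum_policy_Q -V_bellman // opprD addrA.
have flowE : \sum_(u : S) dvis P gamma p s u * (gamma * \sum_(v : S) Ppi P p u v * V P Rc gamma q v)
    = \sum_(v : S) dvis P gamma p s v * V P Rc gamma q v - (1 - gamma) * V P Rc gamma q s.
  transitivity (\sum_(v : S) (gamma * \sum_(u : S) dvis P gamma p s u * Ppi P p u v)
                  * V P Rc gamma q v).
    under eq_bigr do rewrite mulrCA mulr_sumr mulr_sumr.
    rewrite exchange_big; apply: eq_bigr => v _; rewrite mulr_sumr mulr_suml.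
    by apply: eq_bigr => u _; rewrite !mulrA.
  have inflowE v : gamma * \sum_(u : S) dvis P gamma p s u * Ppi P p u v =
      dvis P gamma p s v - (1 - gamma) * (if s == v then 1 else 0).
    by rewrite [dvis _ _ _ s v]dvis_bellman // addrAC subrr add0r.
  under eq_bigr do rewrite inflowE mulrBl -mulrA.
  by rewrite sumrB -mulr_sumr sum_delta.
under eq_bigr do rewrite advE !mulrBr.
rewrite !sumrB flowE sum_dvis_Rpi //; ring.
Qed.

Lemma Vrho_performance_difference rho (p q : S -> A -> R) :
  is_policy p -> is_policy q ->
  (1 - gamma) * (Vrho P Rc gamma rho q - Vrho P Rc gamma rho p) =
  \sum_(u : S) drho P gamma rho p u * \sum_(a : A) (q u a - p u a) * Q P Rc gamma q u a.
Proof.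
move=> hp hq; rewrite /Vrho -sumrB mulr_sumr.
under eq_bigr do rewrite -mulrBr mulrCA -performance_difference // mulr_sumr.
rewrite exchange_big; apply: eq_bigr => u _.
by rewrite mulr_suml; apply: eq_bigr => s _; rewrite mulrA.
Qed.

Lemma Vrho_le_Vstar rho pistar : is_distr rho -> is_policy pistar ->
  (forall p, is_policy p -> forall s, V P Rc gamma pistar s <= V P Rc gamma p s) ->
  Vrho P Rc gamma rho pistar <= Vstar P Rc gamma rho.
Proof.
move=> [rho0 _] hps hopt; apply: lb_le_inf; first by exists (Vrho P Rc gamma rho pistar), pistar.
by move=> _ [p hp <-]; apply: ler_sum => s _; rewrite ler_wpM2l ?hopt.
Qed.

End PerformanceDifference.

Section Euclidean.
Variables (R : realType) (S A : finType).
Implicit Types (x y p q : S -> A -> R) (C : (S -> A -> R) -> Prop).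

Definition dotp x y : R := \sum_(s : S) \sum_(a : A) x s a * y s a.

Lemma dotpE x y : dotp x y = \sum_(i : S * A) x i.1 i.2 * y i.1 i.2.
Proof. exact: pair_big. Qed.

Lemma dotpC x y : dotp x y = dotp y x.
Proof. by apply: eq_bigr => s _; apply: eq_bigr => a _; rewrite mulrC. Qed.

Lemma dotpp_ge0 x : 0 <= dotp x x.
Proof. by apply: sumr_ge0 => s _; apply: sumr_ge0 => a _; rewrite -expr2 sqr_ge0. Qed.

Lemma norm2E x : norm2 x = Num.sqrt (dotp x x).
Proof. by rewrite /norm2; congr Num.sqrt; apply: eq_bigr => s _; apply: eq_bigr => a _. Qed.

Lemma norm2_ge0 x : 0 <= norm2 x.
Proof. exact: sqrtr_ge0. Qed.

Lemma sqr_norm2 x : norm2 x ^+ 2 = dotp x x.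
Proof. by rewrite norm2E sqr_sqrtr ?dotpp_ge0. Qed.

Lemma norm2_eq0_dotp x y : norm2 x = 0 -> dotp x y = 0.
Proof.
move=> /(congr1 (fun r => r ^+ 2)); rewrite sqr_norm2 expr0n /= dotpE => xx0.
have x0 i : x i.1 i.2 = 0.
  apply/eqP; rewrite -sqrf_eq0 expr2; apply/eqP; move: i isT; apply: psumr_eq0P xx0.
  by move=> i _; rewrite -expr2 sqr_ge0.
by rewrite dotpE big1 // => i _; rewrite x0 mul0r.
Qed.

Lemma dotp_le_norm2 x y : dotp x y <= norm2 x * norm2 y.
Proof.
have [x0|xn0] := eqVneq (norm2 x) 0; first by rewrite norm2_eq0_dotp // x0 mul0r.
have [y0|yn0] := eqVneq (norm2 y) 0; first by rewrite dotpC norm2_eq0_dotp // y0 mulr0.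
set a := norm2 x; set b := norm2 y.
have ab0 : 0 < a * b by rewrite mulr_gt0 // lt_def ?xn0 ?yn0 norm2_ge0.
have := dotpp_ge0 (fun s t => b * x s t - a * y s t).
have -> : dotp (fun s t => b * x s t - a * y s t) (fun s t => b * x s t - a * y s t) =
    b ^+ 2 * dotp x x - 2 * a * b * dotp x y + a ^+ 2 * dotp y y.
  by rewrite !dotpE !mulr_sumr -sumrB -big_split; apply: eq_bigr => i _ /=; ring.
rewrite -!sqr_norm2 -/a -/b => h.
by rewrite -(ler_pM2l ab0); nra.
Qed.

Lemma norm2Z k x : norm2 (fun s a => k * x s a) = `|k| * norm2 x.
Proof.
rewrite !norm2E -sqrtr_sqr -sqrtrM ?sqr_ge0 // !dotpE mulr_sumr.
by congr Num.sqrt; apply: eq_bigr => i _; rewrite mulrACA -expr2.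
Qed.

Lemma norm2_distrC x y :
  norm2 (fun s a => x s a - y s a) = norm2 (fun s a => y s a - x s a).
Proof.
by rewrite !norm2E !dotpE; congr Num.sqrt; apply: eq_bigr => i _; rewrite -mulrNN !opprB.
Qed.

Definition convex_set C := forall x y t, C x -> C y -> 0 <= t <= 1 ->
  C (fun s a => x s a + t * (y s a - x s a)).

Definition is_proj C x p := C p /\ forall q, C q ->
  norm2 (fun s a => x s a - p s a) <= norm2 (fun s a => x s a - q s a).

Lemma proj_variational C x p q : convex_set C -> is_proj C x p -> C q ->
  dotp (fun s a => x s a - p s a) (fun s a => q s a - p s a) <= 0.
Proof.
move=> hC [hp hmin] hq; set Z := dotp _ _; rewrite leNgt; apply/negP => Z0.
(* Then the step t = Z / (Z + N) from p towards q would bring x strictly closer. *)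
set N := dotp (fun s a => q s a - p s a) (fun s a => q s a - p s a).
have N0 : 0 <= N := dotpp_ge0 _.
have ZN0 : 0 < Z + N by rewrite ltr_wpDr.
pose t := Z / (Z + N).
have t0 : 0 < t by rewrite divr_gt0.
have ht : 0 <= t <= 1 by rewrite ltW //= ler_pdivrMr // mul1r lerDl.
have := hmin _ (hC _ _ t hp hq ht); rewrite !norm2E ler_sqrt ?dotpp_ge0 //.
have -> : dotp (fun s a => x s a - (p s a + t * (q s a - p s a)))
               (fun s a => x s a - (p s a + t * (q s a - p s a))) =
    dotp (fun s a => x s a - p s a) (fun s a => x s a - p s a) - 2 * t * Z + t ^+ 2 * N.
  by rewrite /Z /N !dotpE !mulr_sumr -sumrB -big_split; apply: eq_bigr => i _ /=; ring.
move=> h.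
have tN : t * N <= Z.
  rewrite -[X in _ <= X](divfK (lt0r_neq0 ZN0)) -/t.
  by apply: ler_wpM2l; rewrite ?lerDr ltW.
nra.
Qed.

Lemma dotp_proj_step_le C (F : (S -> A -> R) -> S -> A -> R) L pi q T :
  convex_set C -> 0 < L ->
  (forall p p', C p -> C p' ->
     norm2 (fun s a => F p s a - F p' s a) <= L * norm2 (fun s a => p s a - p' s a)) ->
  C pi -> C q -> is_proj C (fun s a => pi s a - L^-1 * F pi s a) T ->
  dotp (F T) (fun s a => T s a - q s a) <=
    2 * norm2 (fun s a => L * (pi s a - T s a)) * norm2 (fun s a => T s a - q s a).
Proof.
move=> hC L0 hL hpi hq hproj; have hT : C T by case: hproj.
set G := norm2 (fun s a => L * (pi s a - T s a)).
set D := norm2 (fun s a => T s a - q s a).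
have -> : dotp (F T) (fun s a => T s a - q s a) =
    dotp (fun s a => L * (pi s a - T s a)) (fun s a => T s a - q s a)
    + L * dotp (fun s a => pi s a - L^-1 * F pi s a - T s a) (fun s a => q s a - T s a)
    + dotp (fun s a => F T s a - F pi s a) (fun s a => T s a - q s a).
  rewrite !dotpE mulr_sumr -!big_split; apply: eq_bigr => i _ /=.
  by field; rewrite gt_eqF.
have step_le := dotp_le_norm2 (fun s a => L * (pi s a - T s a)) (fun s a => T s a - q s a).
have proj_le := proj_variational hC hproj hq.
have grad_le : dotp (fun s a => F T s a - F pi s a) (fun s a => T s a - q s a) <= G * D.
  apply: le_trans (dotp_le_norm2 _ _) _; rewrite ler_wpM2r ?norm2_ge0 //.
  by rewrite /G norm2Z gtr0_norm // norm2_distrC; exact: hL.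
rewrite -/G -/D in step_le; have : L * dotp _ _ <= 0 := mulr_ge0_le0 (ltW L0) proj_le.
lra.
Qed.

End Euclidean.

Section Policies.
Variables (R : realType) (S A : finType).
Implicit Types p q : S -> A -> R.

Lemma is_policy_convex : convex_set (@is_policy R S A).
Proof.
move=> p q t hp hq /andP[t0 t1] s; split.
  move=> a; have := proj1 (hp s) a; have := proj1 (hq s) a => q0 p0.
  have -> : p s a + t * (q s a - p s a) = (1 - t) * p s a + t * q s a by ring.
  by rewrite addr_ge0 ?mulr_ge0 ?subr_ge0.
by rewrite big_split /= -mulr_sumr sumrB (proj2 (hp s)) (proj2 (hq s)) subrr mulr0 addr0.
Qed.

Lemma policy_le1 p : is_policy p -> forall s a, p s a <= 1.
Proof.
move=> hp s a; rewrite -(proj2 (hp s)) (bigD1 a) //= lerDl.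
by apply: sumr_ge0 => b _; exact: (proj1 (hp s)).
Qed.

Lemma norm2_policyB_le p q : is_policy p -> is_policy q ->
  norm2 (fun s a => p s a - q s a) <= Num.sqrt (2 * #|S|%:R).
Proof.
move=> hp hq; rewrite norm2E ler_wsqrtr //.
apply: (@le_trans _ _ (\sum_(s : S) \sum_(a : A) (p s a + q s a))).
  apply: ler_sum => s _; apply: ler_sum => a _.
  have := proj1 (hp s) a; have := proj1 (hq s) a.
  have := policy_le1 hp s a; have := policy_le1 hq s a; nra.
rewrite (eq_bigr (fun _ => 2)) ?sumr_const ?mulr_natr // => s _.
by rewrite big_split /= (proj2 (hp s)) (proj2 (hq s)).
Qed.

End Policies.

Lemma ratio_infP (R : realType) (S : finType) (d mu : S -> R) c :
  (forall s, 0 <= d s) -> (forall s, 0 <= mu s) -> ratio_inf d mu = c%:E ->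
  0 <= c /\ forall s, d s <= c * mu s.
Proof.
move=> d0 mu0 dmuE.
have le_c s : 0 <= c /\ d s <= c * mu s.
  have := @Order.TotalTheory.le_bigmax _ _ S (-oo)%E
    (fun s => if mu s == 0 then (if d s == 0 then 1%E else +oo%E) else (d s / mu s)%:E) s.
  rewrite -/(ratio_inf d mu) dmuE.
  case: eqP => [mus0|/eqP mus0].
    case: eqP => [ds0|_]; last by rewrite leNgt ltey.
    by rewrite lee_fin mus0 ds0 mulr0 => /(le_trans ler01).
  have mup : 0 < mu s by rewrite lt0r mus0 mu0.
  rewrite lee_fin => h; split; first exact: le_trans (divr_ge0 (d0 s) (mu0 s)) h.
  by rewrite -ler_pdivrMr.
split; last by move=> s; case: (le_c s).
case: (pickP (@predT S)) => [s _|S0]; first by case: (le_c s).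
by move: dmuE; rewrite /ratio_inf big_pred0.
Qed.

Lemma sum_mismatch_le (R : realType) (S : finType) (d d' mu f : S -> R) (c k : R) :
  0 < k -> 0 <= c -> (forall s, 0 <= d s) ->
  (forall s, d s <= c * mu s) -> (forall s, k * mu s <= d' s) ->
  \sum_(s : S) d s * f s <= c / k * \sum_(s : S) d' s * Num.max (f s) 0.
Proof.
move=> k0 c0 d0 d_le d'_ge; rewrite mulr_sumr; apply: ler_sum => s _.
have f0 : 0 <= Num.max (f s) 0 by rewrite le_max lexx orbT.
apply: (@le_trans _ _ (c * mu s * Num.max (f s) 0)).
  by apply: le_trans (ler_wpM2r f0 (d_le s)); rewrite ler_wpM2l // le_max lexx.
by rewrite mulrA ler_wpM2r // -mulrA ler_wpM2l // mulrC ler_pdivlMr // mulrC.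
Qed.

Lemma policy_positive_part (R : realType) (S A : finType) (p q Qf : S -> A -> R) :
  is_policy p -> is_policy q ->
  exists2 r, is_policy r & forall s,
    Num.max (\sum_(a : A) (q s a - p s a) * Qf s a) 0 = \sum_(a : A) (q s a - r s a) * Qf s a.
Proof.
move=> hp hq; pose adv s := \sum_(a : A) (q s a - p s a) * Qf s a.
exists (fun s a => if 0 <= adv s then p s a else q s a).
  by move=> s; case: (0 <= adv s).
move=> s; have [//|_] := leP 0 (adv s).
by rewrite big1 // => a _; rewrite subrr mul0r.
Qed.

Lemma dotp_gradV (R : realType) (S A : finType) (P : S -> A -> S -> R) (Rc : S -> A -> R)
    gamma mu pi (y : S -> A -> R) :
  dotp (gradV P Rc gamma mu pi) y =
  (1 - gamma)^-1 * \sum_(u : S) drho P gamma mu pi u * \sum_(a : A) y u a * Q P Rc gamma pi u a.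
Proof.
rewrite mulr_sumr; apply: eq_bigr => u _; rewrite !mulr_sumr; apply: eq_bigr => a _.
by rewrite /gradV; ring.
Qed.

Theorem lemma5 (R : realType) (S A : finType)
  (P : S -> A -> S -> R) (Rc : S -> A -> R) (gamma : R)
  (rho mu : S -> R) (L : R) (pistar : S -> A -> R)
  (pi : S -> A -> R) (T : S -> A -> R) :
  (forall s a, is_distr (P s a)) ->
  (forall s a, 0 <= Rc s a <= 1) ->
  0 <= gamma < 1 ->
  is_distr rho -> is_distr mu ->
  0 < L ->
  (forall p p', is_policy p -> is_policy p' ->
     norm2 (fun s a => gradV P Rc gamma mu p s a - gradV P Rc gamma mu p' s a)
       <= L * norm2 (fun s a => p s a - p' s a)) ->
  is_policy pistar ->
  (forall p, is_policy p -> forall s, V P Rc gamma pistar s <= V P Rc gamma p s) ->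
  is_policy pi ->
  is_proj_Pi (fun s a => pi s a - L^-1 * gradV P Rc gamma mu pi s a) T ->
  ratio_inf (drho P gamma rho pistar) mu \is a fin_num ->
  ((Vrho P Rc gamma rho T - Vstar P Rc gamma rho)%:E
     <= ((2 * Num.sqrt (2 * #|S|%:R)) / (1 - gamma))%:E
        * ratio_inf (drho P gamma rho pistar) mu
        * (norm2 (fun s a => L * (pi s a - T s a)))%:E)%E.
Proof.
(* The costs need not lie in [0, 1]: any cost on a finite state space is bounded. *)
move=> hP _ hg hrho hmu L0 hL hps hopt hpi hproj hfin.
have hT : is_policy T by case: hproj.
have g1 : 0 < 1 - gamma by case/andP: hg => _; rewrite subr_gt0.
set c := fine (ratio_inf (drho P gamma rho pistar) mu).
have cE : ratio_inf (drho P gamma rho pistar) mu = c%:E by rewrite fineK.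
have [c0 d_le] := ratio_infP (drho_ge0 hP hps hg (proj1 hrho)) (proj1 hmu) cE.
have [r hr advE] := policy_positive_part (Q P Rc gamma T) hps hT.
set G := norm2 (fun s a => L * (pi s a - T s a)); set K := Num.sqrt (2 * #|S|%:R).
have gap_le : (1 - gamma) * (Vrho P Rc gamma rho T - Vrho P Rc gamma rho pistar)
    <= c * (2 * G * K).
  rewrite Vrho_performance_difference //.
  apply: le_trans (@sum_mismatch_le _ _ _ _ _
    (fun u => \sum_(a : A) (T u a - pistar u a) * Q P Rc gamma T u a) _ _
    g1 c0 (drho_ge0 hP hps hg (proj1 hrho)) d_le (drho_ge hP hT hg hmu)) _.
  under eq_bigr do rewrite advE.
  rewrite -[X in _ * X](mulVKf (lt0r_neq0 g1)) -dotp_gradV.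
  rewrite [leLHS]mulrA divfK ?lt0r_neq0 // ler_wpM2l //.
  apply: le_trans (dotp_proj_step_le (@is_policy_convex R S A) L0 hL hpi hr hproj) _.
  by rewrite ler_wpM2l ?mulr_ge0 ?norm2_ge0 ?norm2_policyB_le.
rewrite cE -!EFinM lee_fin.
apply: le_trans (_ : _ <= Vrho P Rc gamma rho T - Vrho P Rc gamma rho pistar) _.
  by rewrite lerB // Vrho_le_Vstar.
rewrite -(ler_pM2l g1); apply: le_trans gap_le _.
rewrite (_ : (1 - gamma) * _ = c * (2 * G * K)) //.
by field; rewrite lt0r_neq0.
Qed.
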